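(* Let $\mathcal X,\mathcal C,d$ be as in the context, $\epsilon\in[0,1]$, $N\ge1$, and let $\mathcal B$ be any set of $M$ vectors $b\in\{-1,1\}^d$ satisfying $\sum_{y\in C}b_{(y,C)}=0$ for all $C\in\mathcal C$ and $\sum_{C\in\mathcal C,\,C\ni x}b_{(x,C)}=0$ for all $x\in\mathcal X$. Let $\mathbb P_0=p_0^N$ and $\mathbb P_1=\frac1M\sum_{b\in\mathcal B}q_{b,\epsilon}^N$. Then $$\chi^2(\mathbb P_1,\mathbb P_0)+1\le\frac1{M^2}\sum_{b,b'\in\mathcal B}\exp\Big(\frac{N\epsilon^2}{d}b^Tb'\Big).$$
   Context: $\mathcal X$ is a finite set of $n$ items, $\mathcal C$ a collection of distinct subsets of $\mathcal X$ of size at least 2, $d=\sum_{C\in\mathcal C}|C|$, and vectors/distributions in dimension $d$ are indexed by pairs $(x,C)$ with $x\in C\in\mathcal C$. $p_0$ is the uniform distribution on these $d$ pairs, and for $b$ as in the claim $q_{b,\epsilon}((x,C))=\frac1d+\frac{\epsilon b_{(x,C)}}d$. For a distribution $\mu$, $\mu^N$ is the law of $N$ i.i.d. samples. For distributions $P,Q$ on a finite set, $\chi^2(P,Q)=\mathbb E_Q[(dP/dQ)^2]-1$. *)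

From mathcomp Require Import all_boot all_order all_algebra.
From mathcomp Require Import reals sequences exp.
Set Implicit Arguments. Unset Strict Implicit. Unset Printing Implicit Defensive.
Import Order.TTheory GRing.Theory Num.Theory.
Local Open Scope ring_scope.

Definition pairIdx (X : finType) (Cc : {set {set X}}) : Type :=
  {p : X * {set X} | (p.2 \in Cc) && (p.1 \in p.2)}.

Section Defs.
Variables (R : realType) (X : finType) (Cc : {set {set X}}).
Local Notation I := (pairIdx Cc).

Definition dimd : nat := #|{: I}|.

Definition p0 (i : I) : R := 1 / (dimd%:R).

Definition qbe (b : {ffun I -> R}) (eps : R) (i : I) : R :=
  1 / (dimd%:R) + eps * b i / (dimd%:R).

Definition prodlaw (mu : I -> R) (N : nat) (w : {ffun 'I_N -> I}) : R :=
  \prod_(k < N) mu (w k).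

Definition mixture (B : seq {ffun I -> R}) (eps : R) (N : nat)
  (w : {ffun 'I_N -> I}) : R :=
  (size B)%:R^-1 * \sum_(b <- B) prodlaw (qbe b eps) w.

Definition dotv (b b' : {ffun I -> R}) : R := \sum_i b i * b' i.

Definition admissible (b : {ffun I -> R}) : Prop :=
  (forall i, b i = 1 \/ b i = -1) /\
  (forall C, C \in Cc -> \sum_(i : I | (val i).2 == C) b i = 0) /\
  (forall x : X, \sum_(i : I | (val i).1 == x) b i = 0).
End Defs.

Definition chi2 (R : realType) (T : finType) (P Q : T -> R) : R :=
  \sum_(t : T) Q t * (P t / Q t) ^+ 2 - 1.

(** Ingster's second-moment method.  Since [P_0 = p_0^N] is constant (equal to
    [d^-N]), [chi^2(P_1, P_0) + 1 = d^N E[P_1^2]], and expanding the square of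
    the mixture leaves the products [sum_w q_b^N(w) q_b'^N(w)] of two product
    laws, which equal [(sum_i q_b(i) q_b'(i))^N].  The balance conditions kill
    the linear terms, so [d sum_i q_b(i) q_b'(i) = 1 + eps^2 b.b'/d], and
    [(1 + x)^N <= exp(N x)] concludes. *)
From mathcomp Require Import all_boot all_order all_algebra.
From mathcomp Require Import reals sequences exp.
From mathcomp Require Import ring lra.
Import Order.TTheory GRing.Theory Num.Theory.
Local Open Scope ring_scope.

Lemma chi2_addr1 (R : realType) (T : finType) (P Q : T -> R) :
  chi2 P Q + 1 = \sum_t P t ^+ 2 / Q t.
Proof.
rewrite /chi2 subrK; apply: eq_bigr => t _.
have [->|Qt0] := eqVneq (Q t) 0; first by rewrite invr0 !mulr0 mul0r.
by field.
Qed.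

Lemma exprn_le_expR (R : realType) (x y : R) (n : nat) :
  0 <= y -> y <= 1 + x -> y ^+ n <= expR (n%:R * x).
Proof.
move=> y_ge0 le_y_1Dx; rewrite expRM_natl.
apply: lerXn2r; rewrite ?nnegrE ?expR_ge0 //.
exact: le_trans le_y_1Dx (expR_ge1Dx x).
Qed.

Section Mixture.
Variables (R : realType) (X : finType) (Cc : {set {set X}}).
Local Notation I := (pairIdx Cc).
Local Notation d := (dimd Cc).
Implicit Types (b : {ffun I -> R}) (eps : R) (N : nat).

Lemma sum_admissible b : admissible b -> \sum_i b i = 0.
Proof.
move=> [_ [_ sum_row0]].
rewrite (partition_big (fun i : I => (val i).1) predT) //=.
by apply: big1 => x _; apply: sum_row0.
Qed.

Lemma qbe_ge0 b eps i : admissible b -> 0 <= eps <= 1 -> 0 <= qbe b eps i.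
Proof.
move=> [b_sign _] /andP[eps_ge0 eps_le1].
rewrite /qbe -mulrDl divr_ge0 //.
by case: (b_sign i) => ->; lra.
Qed.

Lemma prodlaw_p0 N (w : {ffun 'I_N -> I}) : prodlaw (@p0 R X Cc) w = d%:R ^- N.
Proof. by rewrite /prodlaw /p0 div1r prodr_const card_ord exprVn. Qed.

Lemma prodlawM (mu nu : I -> R) N (w : {ffun 'I_N -> I}) :
  prodlaw mu w * prodlaw nu w = prodlaw (fun i => mu i * nu i) w.
Proof. by rewrite /prodlaw -big_split. Qed.

Lemma sum_prodlaw (mu : I -> R) N :
  \sum_(w : {ffun 'I_N -> I}) prodlaw mu w = (\sum_i mu i) ^+ N.
Proof.
rewrite -(bigA_distr_bigA (fun (_ : 'I_N) i => mu i)) /=.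
by rewrite prodr_const card_ord.
Qed.

Lemma mixture_sqr (B : seq {ffun I -> R}) eps N (w : {ffun 'I_N -> I}) :
  mixture B eps w ^+ 2 = (size B)%:R ^- 2 *
    \sum_(b <- B) \sum_(b' <- B) prodlaw (qbe b eps) w * prodlaw (qbe b' eps) w.
Proof. by rewrite /mixture exprMn exprVn [in X in _ * X]expr2 big_distrlr. Qed.

Lemma chi2_mixture_p0 (B : seq {ffun I -> R}) eps N :
  chi2 (mixture B eps (N:=N)) (prodlaw (@p0 R X Cc) (N:=N)) + 1 =
  (size B)%:R ^- 2 * \sum_(b <- B) \sum_(b' <- B)
    (d%:R * \sum_i qbe b eps i * qbe b' eps i) ^+ N.
Proof.
rewrite chi2_addr1.
under eq_bigr do rewrite prodlaw_p0 invrK mixture_sqr -mulrA mulr_suml.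
rewrite -mulr_sumr exchange_big; congr (_ * _); apply: eq_bigr => b _.
under eq_bigr do rewrite mulr_suml.
rewrite exchange_big; apply: eq_bigr => b' _.
rewrite -mulr_suml exprMn mulrC; congr (_ * _).
by under eq_bigr do rewrite prodlawM; rewrite sum_prodlaw.
Qed.

Lemma dimd_sum_qbeM b b' eps : (0 < d)%N ->
  \sum_i b i = 0 -> \sum_i b' i = 0 ->
  d%:R * \sum_i qbe b eps i * qbe b' eps i = 1 + eps ^+ 2 / d%:R * dotv b b'.
Proof.
move=> d_gt0 sum_b0 sum_b'0.
have d_neq0 : d%:R != 0 :> R by rewrite pnatr_eq0 -lt0n.
have expand_qbeM i : qbe b eps i * qbe b' eps i =
    d%:R ^- 2 + (eps * d%:R ^- 2) * b i + (eps * d%:R ^- 2) * b' i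
    + (eps ^+ 2 * d%:R ^- 2) * (b i * b' i).
  by rewrite /qbe; field.
under eq_bigr do rewrite expand_qbeM.
rewrite !big_split /= -!mulr_sumr sum_b0 sum_b'0 sumr_const -/(dimd Cc).
by rewrite /dotv -mulr_natr; field.
Qed.

Lemma overlap_le_expR b b' eps N :
  admissible b -> admissible b' -> 0 <= eps <= 1 ->
  (d%:R * \sum_i qbe b eps i * qbe b' eps i) ^+ N <=
  expR (N%:R * eps ^+ 2 / d%:R * dotv b b').
Proof.
move=> adm_b adm_b' eps01; rewrite -2!mulrA; apply: exprn_le_expR.
  by rewrite mulr_ge0 // sumr_ge0 // => i _; rewrite mulr_ge0 ?qbe_ge0.
have [d0|d_gt0] := posnP d.
  by rewrite d0 mul0r invr0 mul0r mulr0 addr0.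
by rewrite [eps ^+ 2 * _]mulrA dimd_sum_qbeM // sum_admissible.
Qed.

End Mixture.

Theorem lemma5p1 (R : realType) (X : finType) (Cc : {set {set X}})
  (hC : forall C, C \in Cc -> (2 <= #|C|)%N)
  (eps : R) (heps : 0 <= eps <= 1) (N : nat) (hN : (1 <= N)%N)
  (B : seq {ffun pairIdx Cc -> R}) (huniq : uniq B)
  (hB : forall b, b \in B -> admissible b) :
  chi2 (mixture B eps (N:=N)) (prodlaw (@p0 R X Cc) (N:=N)) + 1 <=
  (size B)%:R ^- 2 *
    \sum_(b <- B) \sum_(b' <- B)
      expR (N%:R * eps ^+ 2 / (dimd Cc)%:R * dotv b b').
Proof.
rewrite chi2_mixture_p0 ler_wpM2l ?invr_ge0 ?exprn_ge0 //.
rewrite big_seq [leRHS]big_seq; apply: ler_sum => b bB.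
rewrite big_seq [leRHS]big_seq; apply: ler_sum => b' b'B.
exact: overlap_le_expR (hB b bB) (hB b' b'B) heps.
Qed.
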